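(* Every real-valued function $f$ on streams that is subadditive, non-negative, bounded and monotone is $2$-almost-smooth.
   Context: For disjoint consecutive segments $A,B$ of a stream, $AB$ denotes their concatenation; $n$ is a size measure of the stream. $f$ is subadditive if $f(AB)\le f(A)+f(B)$ for all disjoint segments $A,B$; non-negative if $f(A)\ge0$; bounded if $f(A)\le\mathrm{poly}(n)$ for every stream $A$; monotone if $f(AB)\ge f(B)$ and $f(AB)\ge f(A)$ for all disjoint segments $A,B$. A function is $d$-almost-smooth if it is $(1,d)$-almost-smooth, where $f$ is $(c,d)$-almost-smooth ($c,d\ge1$) if: (1) $f(A)\ge0$ for all $A$; (2) $f(B)\le c\,f(AB)$ for all disjoint segments $A,B$; (3) $f(A)\le\mathrm{poly}(n)$; (4) for all disjoint consecutive segments $A,B,C$ with $f(AB)\neq0$ and $f(ABC)\ne0$, $\frac{f(B)}{f(AB)}\le d\cdot\frac{f(BC)}{f(ABC)}$. *)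

(* Streams over an alphabet T are finite sequences (seq T);
   concatenation of disjoint consecutive segments A,B is A ++ B. *)
From mathcomp Require Import all_boot all_order all_algebra.
Set Implicit Arguments. Unset Strict Implicit. Unset Printing Implicit Defensive.
Import Order.TTheory GRing.Theory Num.Theory.
Local Open Scope ring_scope.

Section Defs.
Variables (R : realFieldType) (T : Type).
Implicit Types (f : seq T -> R).

Definition subadditive f := forall A B : seq T, f (A ++ B) <= f A + f B.
Definition nonnegative f := forall A : seq T, 0 <= f A.
Definition poly_bounded f :=
  exists (C k : nat), forall A : seq T, f A <= C%:R * (size A)%:R ^+ k + C%:R.
Definition monotone f := forall A B : seq T, f B <= f (A ++ B) /\ f A <= f (A ++ B).

Definition almost_smooth (c d : R) f :=
  [/\ 1 <= c, 1 <= d,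
      nonnegative f,
      (forall A B : seq T, f B <= c * f (A ++ B)) &
      poly_bounded f /\
      (forall A B C : seq T, f (A ++ B) != 0 -> f (A ++ B ++ C) != 0 ->
         f B / f (A ++ B) <= d * (f (B ++ C) / f (A ++ B ++ C)))].

Definition d_almost_smooth (d : R) f := almost_smooth 1 d f.
End Defs.

From mathcomp Require Import all_boot all_order all_algebra.
From mathcomp Require Import lra.
Import Order.TTheory GRing.Theory Num.Theory.
Local Open Scope ring_scope.

(* With x = f B, y = f(AB), z = f(BC), w = f(ABC): monotonicity gives
   x <= y and x <= z, subadditivity gives w <= f A + z <= y + z, hence
   x w <= x y + x z <= 2 y z, i.e. x / y <= 2 z / w. *)

Lemma ler_div_twice (R : realFieldType) (x y z w : R) :
  0 <= x -> x <= y -> x <= z -> 0 < y -> 0 < w -> w <= y + z ->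
  x / y <= 2 * (z / w).
Proof.
move=> x_ge0 le_xy le_xz y_gt0 w_gt0 le_w_yz.
rewrite mulrA ler_pdivrMr // mulrAC ler_pdivlMr //.
have le_xw : x * w <= x * y + x * z by rewrite -mulrDr ler_wpM2l.
have le_xy_zy : x * y <= z * y by rewrite ler_wpM2r // ltW.
have le_xz_yz : x * z <= y * z by rewrite ler_wpM2r // (le_trans x_ge0).
by apply: (le_trans le_xw); lra.
Qed.

Section SubadditiveMonotone.
Variables (R : realFieldType) (T : Type) (f : seq T -> R).
Hypotheses (f_subadd : subadditive f) (f_ge0 : nonnegative f) (f_mono : monotone f).

Lemma monotone_suffix (A B : seq T) : f B <= f (A ++ B).
Proof. by case: (f_mono A B). Qed.

Lemma monotone_prefix (A B : seq T) : f A <= f (A ++ B).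
Proof. by case: (f_mono A B). Qed.

Lemma subadditive_monotone_ratio (A B C : seq T) :
  f (A ++ B) != 0 -> f (A ++ B ++ C) != 0 ->
  f B / f (A ++ B) <= 2 * (f (B ++ C) / f (A ++ B ++ C)).
Proof.
move=> nz_AB nz_ABC.
apply: ler_div_twice.
- exact: f_ge0.
- exact: monotone_suffix.
- exact: monotone_prefix.
- by rewrite lt_def nz_AB f_ge0.
- by rewrite lt_def nz_ABC f_ge0.
- by rewrite (le_trans (f_subadd _ _)) // lerD2r monotone_prefix.
Qed.

End SubadditiveMonotone.

Theorem lemma2p4 (R : realFieldType) (T : Type) (f : seq T -> R) :
  subadditive f -> nonnegative f -> poly_bounded f -> monotone f ->
  d_almost_smooth 2 f.
Proof.
move=> f_subadd f_ge0 f_bounded f_mono; split => //.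
- by rewrite ler1n.
- by move=> A B; rewrite mul1r monotone_suffix.
- split=> // A B C; exact: subadditive_monotone_ratio.
Qed.
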